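(* For every ${\bf F}(z)=\sum_{c=1}^sF_c(z)\otimes e_c\in\hat\Lambda^{(s)}\otimes V$ and every $N\in{\mathbb N}$, $$E_N\big((\bar\pi_{N-1}\otimes1){\bf F}(z)\big)=\bar\pi_N\big(\mathcal S({\bf F}(z))\big)$$ as elements of $\Lambda^{s,N}_+$.
   Context: Fix $s\ge1$. Let $\hat\Lambda^{(s)}={\mathbb C}[p_{a,k}: a=1,\dots,s,\ k=0,1,2,\dots]$, $e_1,\dots,e_s$ the standard basis of ${\mathbb C}^s$, $V={\mathbb C}[z]\otimes{\mathbb C}^s$. For $c=1,\dots,s$, $\Phi_c(z)$ is the substitution $p_{c,k}\mapsto p_{c,k}+z^k$ ($k\ge0$) and $\Phi_c^{-1}(z)$ the substitution $p_{c,k}\mapsto p_{c,k}-z^k$ ($k\ge0$), other variables unchanged; $\varphi^-_c(z)=\sum_{k\ge0}p_{c,k}z^{-k}$ (multiplication operator). $\langle0|_+$ is the constant-term functional on $\hat\Lambda^{(s)}$. Define $\bar\pi_N(|v\rangle_+)=\sum_{c_1,\dots,c_N}\langle0|_+\Phi_{c_N}(x_N)\cdots\Phi_{c_1}(x_1)|v\rangle_+\,e_{c_1}\otimes\cdots\otimes e_{c_N}\in{\mathbb C}[x_1,\dots,x_N]\otimes({\mathbb C}^s)^{\otimes N}$ (the $i$-th factor carries $x_i$). $\Lambda^{s,N}_+$ is the space of such tensors invariant under all $\sigma_{ij}=K_{ij}P_{ij}$ ($K_{ij}$ swaps $x_i,x_j$; $P_{ij}$ swaps tensor factors $i,j$).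 $(\bar\pi_{N-1}\otimes1){\bf F}(z)$ denotes $\sum_{c_1,\dots,c_N}\langle0|_+\Phi_{c_N}(x_N)\cdots\Phi_{c_2}(x_2)F_{c_1}(x_1)\,e_{c_1}\otimes\cdots\otimes e_{c_N}$, which is invariant under $\sigma_{ij}$ for $i,j\ge2$. For such a tensor $u$, $E_N(u)=\sum_{j=1}^N\sigma_{1j}(u)$ with $\sigma_{11}=\mathrm{id}$. Finally $\mathcal S({\bf F}(z))\in\hat\Lambda^{(s)}$ is the coefficient of $z^0$ of the Laurent series $\sum_{c=1}^s\varphi^-_c(z)\,\Phi_c^{-1}(z)F_c(z)$ (here $\Phi_c^{-1}(z)$ acts on the $\hat\Lambda^{(s)}$-coefficients of $F_c(z)$). *)

From HB Require Import structures.
From mathcomp Require Import all_boot all_order all_algebra.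
Set Implicit Arguments. Unset Strict Implicit. Unset Printing Implicit Defensive.
Import GRing.Theory.
Local Open Scope ring_scope.

(* Lambda-hat^(s) with coefficients in A: the polynomial ring                *)
(* A[p_{a,k} : a < s, k >= 0], presented by polynomial expressions.  All     *)
(* maps below are defined on expressions as (evaluations of) ring            *)
(* homomorphisms, hence are well defined on the polynomial ring itself.      *)
Inductive Lam (A : Type) (s : nat) : Type :=
| LC of A
| LP of 'I_s & nat              (* the variable p_{a,k} *)
| LAdd of Lam A s & Lam A s
| LMul of Lam A s & Lam A s.
Arguments LC {A s}. Arguments LP {A s}. Arguments LAdd {A s}. Arguments LMul {A s}.

Section LamOps.
Variables (s : nat).

Fixpoint lmap (R A : Type) (f : R -> A) (e : Lam R s) : Lam A s :=
  match e with
  | LC r => LC (f r)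
  | LP a k => LP a k
  | LAdd e1 e2 => LAdd (lmap f e1) (lmap f e2)
  | LMul e1 e2 => LMul (lmap f e1) (lmap f e2)
  end.

Fixpoint Phi (A : nzRingType) (c : 'I_s) (x : A) (e : Lam A s) : Lam A s :=
  match e with
  | LC r => LC r
  | LP a k => if a == c then LAdd (LP a k) (LC (x ^+ k)) else LP a k
  | LAdd e1 e2 => LAdd (Phi c x e1) (Phi c x e2)
  | LMul e1 e2 => LMul (Phi c x e1) (Phi c x e2)
  end.

(* <0|_+ : constant term (all p_{a,k} set to 0) *)
Fixpoint vac0 (A : nzRingType) (e : Lam A s) : A :=
  match e with
  | LC r => r
  | LP _ _ => 0
  | LAdd e1 e2 => vac0 e1 + vac0 e2
  | LMul e1 e2 => vac0 e1 * vac0 e2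
  end.

Definition lsum (A : nzRingType) (l : seq (Lam A s)) : Lam A s :=
  foldr LAdd (LC 0) l.

(* Lambda-hat[z] = Lambda-hat (x) C[z], as coefficient lists in z *)
Fixpoint padd (A : Type) (p q : seq (Lam A s)) : seq (Lam A s) :=
  match p, q with
  | [::], _ => q
  | _, [::] => p
  | a :: p', b :: q' => LAdd a b :: padd p' q'
  end.

Fixpoint pmul (A : nzRingType) (p q : seq (Lam A s)) : seq (Lam A s) :=
  match p with
  | [::] => [::]
  | a :: p' => padd (map (LMul a) q) (LC 0 :: pmul p' q)
  end.

(* Phi_c^{-1}(z) : Lambda-hat -> Lambda-hat[z], p_{c,k} |-> p_{c,k} - z^k *)
Fixpoint PhiInvZ (A : nzRingType) (c : 'I_s) (e : Lam A s) : seq (Lam A s) :=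
  match e with
  | LC r => [:: LC r]
  | LP a k => if a == c then padd [:: LP a k] (rcons (nseq k (LC 0)) (LC (-1)))
              else [:: LP a k]
  | LAdd e1 e2 => padd (PhiInvZ c e1) (PhiInvZ c e2)
  | LMul e1 e2 => pmul (PhiInvZ c e1) (PhiInvZ c e2)
  end.

End LamOps.

(* C[x_1,...,x_N]: iterated univariate polynomials; x_{i+1} is mvar i.       *)
Fixpoint mpoly (R : comNzRingType) (n : nat) : comNzRingType :=
  match n with
  | 0 => R
  | n'.+1 => ({poly mpoly R n'} : comNzRingType)
  end.

Fixpoint mconst (R : comNzRingType) (n : nat) (r : R) : mpoly R n :=
  match n return mpoly R n with
  | 0 => r
  | n'.+1 => (mconst n' r)%:P
  end.

Fixpoint mvar (R : comNzRingType) (n : nat) (i : nat) : mpoly R n :=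
  match n return mpoly R n with
  | 0 => 0
  | n'.+1 => if i == n' then 'X else (mvar R n' i)%:P
  end.

Fixpoint meval (R A : comNzRingType) (cst : R -> A) (v : nat -> A) (n : nat)
  : mpoly R n -> A :=
  match n return mpoly R n -> A with
  | 0 => cst
  | n'.+1 => fun p : {poly mpoly R n'} => (map_poly (@meval R A cst v n') p).[v n']
  end.

Definition swapn (i j k : nat) : nat := if k == i then j else if k == j then i else k.
Definition swapo (N : nat) (i j k : 'I_N) : 'I_N :=
  if k == i then j else if k == j then i else k.

(* Tensors in C[x_1..x_N] (x) (C^s)^{(x)N}: the coefficient of               *)
(* e_{c_1} (x) ... (x) e_{c_N} for the colouring c : 'I_N -> 'I_s.           *)
Definition tens (R : comNzRingType) (s N : nat) := {ffun 'I_N -> 'I_s} -> mpoly R N.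

(* Phi_{c_{i_m}}(x_{i_m}) ... Phi_{c_{i_1}}(x_{i_1}) applied to e, l = [i_1..i_m] *)
Definition Phis (R : comNzRingType) (s N : nat) (c : {ffun 'I_N -> 'I_s})
    (l : seq 'I_N) (e : Lam (mpoly R N) s) : Lam (mpoly R N) s :=
  foldl (fun acc i => Phi (c i) (mvar R N i) acc) e l.

Definition pibar (R : comNzRingType) (s N : nat) (v : Lam R s) : tens R s N :=
  fun c => vac0 (Phis c (enum 'I_N) (lmap (@mconst R N) v)).

(* Lambda-hat (x) V : F c = list of z-coefficients of F_c(z) *)
Definition LV (R : comNzRingType) (s : nat) := 'I_s -> seq (Lam R s).

Definition evalF (R : comNzRingType) (s N : nat) (F : LV R s) (c : 'I_s)
    (x : mpoly R N) : Lam (mpoly R N) s :=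
  lsum [seq LMul (lmap (@mconst R N) (nth (LC 0) (F c) m)) (LC (x ^+ m))
       | m <- iota 0 (size (F c))].

(* (pibar_{N-1} (x) 1) F(z), with N = n.+1; factor 1 is index ord0 *)
Definition pibar1 (R : comNzRingType) (s n : nat) (F : LV R s) : tens R s n.+1 :=
  fun c => vac0 (Phis c [seq i <- enum 'I_n.+1 | i != ord0 :> 'I_n.+1]
                     (evalF F (c (@ord0 n)) (mvar R n.+1 (@ord0 n)))).

Definition sigma (R : comNzRingType) (s N : nat) (i j : 'I_N) (u : tens R s N)
  : tens R s N :=
  fun c => meval (@mconst R N) (fun k => mvar R N (swapn i j k))
                 (u [ffun k => c (swapo i j k)]).

(* E_N(u) = sum_j sigma_{1j}(u), with sigma_{11} = id *)
Definition EN (R : comNzRingType) (s n : nat) (u : tens R s n.+1) : tens R s n.+1 :=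
  fun c => \sum_(j < n.+1) (if j == @ord0 n then u c else sigma (@ord0 n) j u c).

(* S(F) = [z^0] sum_c phi^-_c(z) Phi_c^{-1}(z) F_c(z); with
   G_c(z) = Phi_c^{-1}(z) F_c(z) = sum_m g_{c,m} z^m, this coefficient is
   sum_c sum_m p_{c,m} g_{c,m}. *)
Definition PhiInvF (R : comNzRingType) (s : nat) (F : LV R s) (c : 'I_s)
  : seq (Lam R s) :=
  foldr (fun f acc => padd (PhiInvZ c f) (LC 0 :: acc)) [::] (F c).

Definition SF (R : comNzRingType) (s : nat) (F : LV R s) : Lam R s :=
  lsum [seq lsum [seq LMul (LP c m) (nth (LC 0) (PhiInvF F c) m)
                 | m <- iota 0 (size (PhiInvF F c))]
       | c <- enum 'I_s].

(* Every operation in the statement is an evaluation of ring homomorphisms on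
   expressions, so both sides can be computed colour by colour.  The vacuum
   value <0|_+ Phi_{c_N}(x_N) ... Phi_{c_1}(x_1) specialises each p_{a,k} to
   the power sum of the x_i^k with c_i = a.  On the left, the j-th summand of
   E_N is therefore F_{c_j}(x_j) with p_{a,k} specialised to the power sums
   of the variables other than x_j.  On the right, pairing with phi^-_c(z)
   replaces z^m by p_{c,m} = sum_{c_i = c} x_i^m, i.e. evaluates
   Phi_c^{-1}(z) F_c(z) at z = x_i for each i of colour c, and
   Phi_{c_i}^{-1}(x_i) removes x_i^k from the power sums of colour c_i: the
   two sides agree term by term. *)
From HB Require Import structures.
From mathcomp Require Import all_boot all_order all_algebra.
From Stdlib Require Import FunctionalExtensionality.
Set Implicit Arguments. Unset Strict Implicit. Unset Printing Implicit Defensive.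
Import GRing.Theory.
Local Open Scope ring_scope.

Section MpolyMorphisms.
Variable R : comNzRingType.

Lemma mconst_is_zmod_morphism n : zmod_morphism (@mconst R n).
Proof. by elim: n => [|n IH] r q //=; rewrite IH polyCB. Qed.

Lemma mconst_is_monoid_morphism n : monoid_morphism (@mconst R n).
Proof.
by elim: n => [|n [IH1 IHM]] //; split=> [|r q] /=; rewrite ?IH1 ?IHM ?polyCM.
Qed.

HB.instance Definition _ n :=
  GRing.isZmodMorphism.Build R (mpoly R n) (@mconst R n) (@mconst_is_zmod_morphism n).
HB.instance Definition _ n :=
  GRing.isMonoidMorphism.Build R (mpoly R n) (@mconst R n) (@mconst_is_monoid_morphism n).

Variables (A : comNzRingType) (cst : {rmorphism R -> A}) (v : nat -> A).

(* [meval] rebuilt as a bundled ring morphism; [meval] inherits its morphism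
   instances from it. *)
Fixpoint meval_rmorph n : {rmorphism mpoly R n -> A} :=
  match n return {rmorphism mpoly R n -> A} with
  | 0 => cst
  | n'.+1 => horner_morph (fun a => mulrC (v n') (meval_rmorph n' a))
  end.

Lemma meval_rmorphE n : @meval R A cst v n =1 meval_rmorph n.
Proof.
elim: n => [|n IH] p //=.
by rewrite /horner_morph; congr (_.[_]); apply: eq_map_poly.
Qed.

Lemma meval_is_zmod_morphism n : zmod_morphism (@meval R A cst v n).
Proof. by move=> p q; rewrite !meval_rmorphE rmorphB. Qed.

Lemma meval_is_monoid_morphism n : monoid_morphism (@meval R A cst v n).
Proof. by split=> [|p q]; rewrite !meval_rmorphE ?rmorph1 ?rmorphM. Qed.

HB.instance Definition _ n :=
  GRing.isZmodMorphism.Build (mpoly R n) A (@meval R A cst v n) (@meval_is_zmod_morphism n).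
HB.instance Definition _ n :=
  GRing.isMonoidMorphism.Build (mpoly R n) A (@meval R A cst v n) (@meval_is_monoid_morphism n).

Lemma meval_mconst n r : meval cst v (mconst n r) = cst r.
Proof. by elim: n => //= n IH; rewrite map_polyC hornerC; exact: IH. Qed.

Lemma meval_mvar n i : (i < n)%N -> meval cst v (mvar R n i) = v i.
Proof.
elim: n => // n IH; rewrite ltnS leq_eqVlt /= => /orP[/eqP->|lt_in].
  by rewrite eqxx map_polyX hornerX.
by rewrite (ltn_eqF lt_in) map_polyC hornerC; exact: IH.
Qed.

End MpolyMorphisms.

Section Evaluation.
Variable s : nat.

Fixpoint leval (R : Type) (A : comNzRingType) (cst : R -> A) (v : 'I_s -> nat -> A)
    (e : Lam R s) : A :=
  match e with
  | LC r => cst r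
  | LP a k => v a k
  | LAdd e1 e2 => leval cst v e1 + leval cst v e2
  | LMul e1 e2 => leval cst v e1 * leval cst v e2
  end.

Lemma eq_leval (R : Type) (A : comNzRingType) (cst cst' : R -> A) v v' e :
  cst =1 cst' -> (forall a k, v a k = v' a k) -> leval cst v e = leval cst' v' e.
Proof. by move=> eq_cst eq_v; elim: e => //= [e1 -> e2 ->|e1 -> e2 ->]. Qed.

Lemma leval_lmap (R B : Type) (A : comNzRingType) (f : R -> B) (cst : B -> A) v e :
  leval cst v (lmap f e) = leval (cst \o f) v e.
Proof. by elim: e => //= [e1 -> e2 ->|e1 -> e2 ->]. Qed.

Lemma rmorph_leval (R : Type) (A B : comNzRingType) (phi : {rmorphism A -> B})
    (cst : R -> A) v e :
  phi (leval cst v e) = leval (phi \o cst) (fun a k => phi (v a k)) e.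
Proof. by elim: e => //= [e1 <- e2 <-|e1 <- e2 <-]; rewrite ?rmorphD ?rmorphM. Qed.

Lemma leval_lsum (R : nzRingType) (A : comNzRingType) (cst : R -> A) v l :
  cst 0 = 0 -> leval cst v (lsum l) = \sum_(e <- l) leval cst v e.
Proof. by move=> cst0; elim: l => [|e l IH]; rewrite ?big_nil ?big_cons //= IH. Qed.

Lemma vac0E (A : comNzRingType) (e : Lam A s) : vac0 e = leval id (fun _ _ => 0) e.
Proof. by elim: e => //= [e1 -> e2 ->|e1 -> e2 ->]. Qed.

Lemma leval_Phi (A : comNzRingType) (c : 'I_s) (x : A) v e :
  leval id v (Phi c x e) = leval id (fun a k => v a k + (a == c)%:R * x ^+ k) e.
Proof.
elim: e => //= [a k|e1 -> e2 ->|e1 -> e2 ->] //.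
by case: eqP; rewrite /= ?mul1r ?mul0r ?addr0.
Qed.

End Evaluation.

Lemma sum_iota0 (V : nmodType) m (f : nat -> V) :
  \sum_(j <- iota 0 m) f j = \sum_(j < m) f j.
Proof. by rewrite -(big_mkord xpredT) /index_iota subn0. Qed.

Section CoefficientLists.
Variables (s : nat) (R : nzRingType) (A : comNzRingType).
Variables (cst : {rmorphism R -> A}) (v : 'I_s -> nat -> A).

Definition lpoly (L : seq (Lam R s)) : {poly A} :=
  foldr (fun e p => (leval cst v e)%:P + p * 'X) 0 L.

Lemma horner_lpoly L y :
  (lpoly L).[y] = \sum_(m < size L) leval cst v (nth (LC 0) L m) * y ^+ m.
Proof.
elim: L => [|e L IH] /=; first by rewrite horner0 big_ord0.
rewrite big_ord_recl hornerD hornerC hornerMX IH big_distrl /= expr0 mulr1.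
by congr (_ + _); apply: eq_bigr => m _; rewrite exprSr mulrA.
Qed.

Lemma lpoly_padd L M : lpoly (padd L M) = lpoly L + lpoly M.
Proof.
elim: L M => [|a L IH] [|b M] /=; rewrite ?add0r ?addr0 //.
by rewrite IH polyCD mulrDl addrACA.
Qed.

Lemma lpoly_pmul L M : lpoly (pmul L M) = lpoly L * lpoly M.
Proof.
have lpoly_LMul a : lpoly (map (LMul a) M) = (leval cst v a)%:P * lpoly M.
  by elim: M => [|b M IH] /=; rewrite ?mulr0 // IH polyCM mulrDr mulrA.
elim: L => [|a L IH] /=; first by rewrite mul0r.
by rewrite lpoly_padd lpoly_LMul /= IH rmorph0 add0r mulrDl mulrAC.
Qed.

Lemma horner_lpoly_PhiInvZ c e y :
  (lpoly (PhiInvZ c e)).[y] = leval cst (fun a k => v a k - (a == c)%:R * y ^+ k) e.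
Proof.
have lpoly_monomial k : lpoly (rcons (nseq k (LC 0)) (LC (-1))) = - 'X^k.
  elim: k => [|k IH] /=; first by rewrite mul0r addr0 rmorphN1 polyCN expr0.
  by rewrite IH rmorph0 add0r exprSr mulNr.
elim: e => [r|a k|e1 IH1 e2 IH2|e1 IH1 e2 IH2].
- by rewrite /= mul0r addr0 hornerC.
- have -> : PhiInvZ c (LP a k) = if a == c
      then padd [:: LP a k] (rcons (nseq k (LC 0)) (LC (-1))) else [:: LP a k] by [].
  rewrite [leval _ _ _]/=; case: eqP => _; last by rewrite /= mul0r addr0 hornerC mul0r subr0.
  rewrite lpoly_padd lpoly_monomial /= mul0r addr0.
  by rewrite hornerD hornerC hornerN hornerXn mul1r.
- by rewrite /= lpoly_padd hornerD IH1 IH2.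
- by rewrite /= lpoly_pmul hornerM IH1 IH2.
Qed.

End CoefficientLists.

Lemma eq_lpoly s (R : nzRingType) (A : comNzRingType) (cst cst' : {rmorphism R -> A})
    v v' (L : seq (Lam R s)) :
  cst =1 cst' -> (forall a k, v a k = v' a k) -> lpoly cst v L = lpoly cst' v' L.
Proof. by move=> eq_cst eq_v; elim: L => //= e L ->; rewrite (eq_leval _ eq_cst eq_v). Qed.

Lemma horner_lpoly_PhiInvF s (R : comNzRingType) (A : comNzRingType)
    (cst : {rmorphism R -> A}) v (F : LV R s) c y :
  (lpoly cst v (PhiInvF F c)).[y]
  = (lpoly cst (fun a k => v a k - (a == c)%:R * y ^+ k) (F c)).[y].
Proof.
rewrite /PhiInvF; elim: (F c) => [|f L IH] /=; first by rewrite !horner0.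
rewrite lpoly_padd /= hornerD horner_lpoly_PhiInvZ rmorph0 add0r !hornerD hornerC.
by rewrite !hornerMX IH.
Qed.

Lemma map_lpoly s (R : nzRingType) (A B : comNzRingType) (cst : {rmorphism R -> A})
    (phi : {rmorphism A -> B}) v (L : seq (Lam R s)) :
  map_poly phi (lpoly cst v L) = lpoly (phi \o cst) (fun a k => phi (v a k)) L.
Proof.
elim: L => [|e L IH] /=; first by rewrite map_poly0.
rewrite rmorphD rmorphM /= map_polyC map_polyX IH.
by congr (_%:P + _); exact: rmorph_leval.
Qed.

Lemma swapoL N (i j : 'I_N) : swapo i j i = j.
Proof. by rewrite /swapo eqxx. Qed.

Lemma swapoK N (i j : 'I_N) : involutive (swapo i j).
Proof.
move=> k; rewrite /swapo.
case: (eqVneq k i) => [->|ki]; first by case: (eqVneq j i) => [->|ji]; rewrite ?eqxx.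
by case: (eqVneq k j) => [->|kj]; rewrite ?eqxx // (negPf ki) (negPf kj).
Qed.

Lemma swapo_val N (i j k : 'I_N) : val (swapo i j k) = swapn i j k.
Proof. by rewrite /swapo /swapn !val_eqE; case: ifP => //; case: ifP. Qed.

Section PowerSums.
Variables (R : comNzRingType) (s N : nat).
Implicit Types (c : {ffun 'I_N -> 'I_s}) (F : LV R s).

Definition psum c (P : pred 'I_N) (a : 'I_s) (k : nat) : mpoly R N :=
  \sum_(i | (c i == a) && P i) mvar R N i ^+ k.

(* [F_{c_j}(x_j)] with [p_{a,k}] specialised to the power sum of the [x_i^k],
   [i <> j], of colour [a]; both sides of the theorem equal [\sum_j Fterm F c j]. *)
Definition Fterm F c (j : 'I_N) : mpoly R N :=
  (lpoly (@mconst R N) (psum c (predC1 j)) (F (c j))).[mvar R N j].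

Lemma leval_Phis c l e v :
  leval id v (Phis c l e)
  = leval id (fun a k => v a k + \sum_(i <- l | c i == a) mvar R N i ^+ k) e.
Proof.
elim: l e v => [|i l IH] e v /=.
  by apply: eq_leval => // a k; rewrite big_nil addr0.
rewrite IH leval_Phi; apply: eq_leval => // a k.
rewrite big_cons eq_sym; case: eqP => _; rewrite ?mul1r ?mul0r ?addr0 //.
by rewrite -addrA (addrC _ (mvar R N i ^+ k)).
Qed.

Lemma leval_evalF F b y w :
  leval id w (evalF F b y) = (lpoly (@mconst R N) w (F b)).[y].
Proof.
rewrite leval_lsum // big_map sum_iota0 horner_lpoly; apply: eq_bigr => m _ /=.
by rewrite leval_lmap.
Qed.

Lemma pibarE (v : Lam R s) c : @pibar R s N v c = leval (@mconst R N) (psum c predT) v.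
Proof.
rewrite /pibar vac0E leval_Phis leval_lmap; apply: eq_leval => // a k.
by rewrite add0r big_enum_cond; apply: eq_bigl => i /=; rewrite andbT.
Qed.

Lemma psum_predC1 c i a k :
  psum c predT a k - (a == c i)%:R * mvar R N i ^+ k = psum c (predC1 i) a k.
Proof.
rewrite /psum; case: (eqVneq a (c i)) => [->|ne].
  rewrite mul1r (bigD1 i) ?eqxx //= addrAC subrr add0r.
  by apply: eq_bigl => l; rewrite andbT.
rewrite mulr0n mul0r subr0; apply: eq_bigl => l /=.
by case: (eqVneq l i) => [->|]; rewrite ?andbT // eq_sym (negPf ne).
Qed.

Lemma horner_PhiInvF_psum F c i :
  (lpoly (@mconst R N) (psum c predT) (PhiInvF F (c i))).[mvar R N i] = Fterm F c i.
Proof.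
rewrite horner_lpoly_PhiInvF; congr (_.[_]).
by apply: eq_lpoly => // a k; rewrite psum_predC1.
Qed.

Lemma sigma_Fterm F (i j : 'I_N) c : sigma i j (fun c => Fterm F c i) c = Fterm F c j.
Proof.
rewrite /sigma /Fterm ffunE swapoL -horner_map /= map_lpoly meval_mvar // -swapo_val swapoL.
congr (_.[_]); apply: eq_lpoly => [r|a k] /=; first exact: meval_mconst.
rewrite rmorph_sum (reindex_inj (inv_inj (swapoK i j))) /=.
apply: eq_big => l; first by rewrite ffunE swapoK (inv_eq (swapoK i j)) swapoL.
by rewrite rmorphXn /= meval_mvar // -swapo_val swapoK.
Qed.

End PowerSums.

Arguments psum {R s N} c P a k.

Section BothSides.
Variables (R : comNzRingType) (s n : nat) (F : LV R s).

Lemma pibar1E : @pibar1 R s n F = fun c => Fterm F c ord0.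
Proof.
apply: functional_extensionality => c.
rewrite /pibar1 vac0E leval_Phis leval_evalF; congr (_.[_]); apply: eq_lpoly => // a k.
rewrite add0r big_filter_cond big_enum_cond; apply: eq_bigl => i /=.
by rewrite andbC.
Qed.

Lemma EN_pibar1 c : EN (@pibar1 R s n F) c = \sum_(j < n.+1) Fterm F c j.
Proof.
rewrite /EN pibar1E; apply: eq_bigr => j _.
by case: eqP => [->|_]; rewrite ?sigma_Fterm.
Qed.

Lemma pibar_SF c : @pibar R s n.+1 (SF F) c = \sum_(j < n.+1) Fterm F c j.
Proof.
rewrite pibarE /SF leval_lsum ?rmorph0 // big_map big_enum.
rewrite [RHS](partition_big (fun j => c j) xpredT) //; apply: eq_bigr => a _.
rewrite leval_lsum ?rmorph0 // big_map sum_iota0.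
under [LHS]eq_bigr => m _ do (cbn [leval]; rewrite [psum _ _ a m]/psum big_distrl).
rewrite exchange_big; apply: eq_big => [i|i /andP[/eqP <- _]]; first by rewrite andbT.
rewrite -horner_PhiInvF_psum horner_lpoly.
by apply: eq_bigr => m _; rewrite mulrC.
Qed.

End BothSides.

Theorem lemma3p2 (R : comNzRingType) (s : nat) (F : LV R s) (n : nat) :
  EN (@pibar1 R s n F) = @pibar R s n.+1 (SF F).
Proof. by apply: functional_extensionality => c; rewrite EN_pibar1 pibar_SF. Qed.
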